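(* Let $H=(A,B;E)$ be a bipartite graph with parts $A,B$, let $n_1=|A|$, $n_2=|B|$, and let $\alpha=|E|/(n_1n_2)$ be its edge density. Then $H$ contains a $K_p^{(3)}$-immersion for every $p\in\mathbb{N}$ with $p\leq\min\{\alpha n_1/16,\ \alpha^2 n_2/192\}$.
   Context: An $H'$-immersion in a graph $G$ is an injective map $\phi:V(H')\to V(G)$ with, for each $uv\in E(H')$, a $\phi(u)$–$\phi(v)$ path $P_{uv}$ in $G$, the paths pairwise edge-disjoint; a $K_p^{(3)}$-immersion is a $K_p$-immersion in which every path $P_{uv}$ has length exactly $4$. *)

From mathcomp Require Import all_boot all_order all_algebra.
Set Implicit Arguments. Unset Strict Implicit. Unset Printing Implicit Defensive.

(* A graph on a finite vertex type T is given by its adjacency relation g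
   (assumed symmetric and irreflexive where it matters; edges are unordered). *)

Definition walk_edges (T : finType) (x : T) (s : seq T) : seq {set T} :=
  [seq [set uv.1; uv.2] | uv <- zip (x :: s) s].

Definition is_path_len (T : finType) (g : rel T) (k : nat) (x y : T) (s : seq T) : Prop :=
  [/\ path g x s, last x s = y, size s = k & uniq (x :: s)].

Definition Kp_immersion_len (T : finType) (g : rel T) (k p : nat) : Prop :=
  exists phi : 'I_p -> T, injective phi /\
  exists P : 'I_p -> 'I_p -> seq T,
    (forall i j : 'I_p, i < j -> is_path_len g k (phi i) (phi j) (P i j)) /\
    (forall i j i' j' : 'I_p, i < j -> i' < j' -> (i, j) != (i', j') ->
       forall ed, ed \in walk_edges (phi i) (P i j) ->
                  ed \notin walk_edges (phi i') (P i' j')).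

(* K_p^{(3)}-immersion: every path has length exactly 4. *)
Definition K3_immersion (T : finType) (g : rel T) (p : nat) : Prop :=
  Kp_immersion_len g 4 p.

Definition bip_adj (A B : finType) (E : {set A * B}) : rel (A + B)%type :=
  fun u v => match u, v with
             | inl a, inr b => (a, b) \in E
             | inr b, inl a => (a, b) \in E
             | _, _ => false
             end.

From mathcomp Require Import all_boot all_order all_algebra zify ring.
Set Implicit Arguments. Unset Strict Implicit. Unset Printing Implicit Defensive.

(* Dependent random choice: averaging over b in B, and using Cauchy-Schwarz for
   sum_b |N(b)|^2, gives a vertex b whose neighbourhood S in A is large while few
   ordered pairs of S have codegree below 8p.  By Markov's inequality at least
   half of S consists of vertices with few such partners; p of them are the
   branch vertices.  The pairs of branch vertices x, y are then routed greedily
   along paths x b z b' y: the midpoint z in S has codegree at least 8p with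
   both x and y and has been used fewer than 2p times, so at most 6p edges at x
   or z are already taken, and fresh edges xb, zb, zb', yb' exist. *)

Lemma sqr_sum_leq_card_sum_sqr (I : finType) (F : I -> nat) :
  (\sum_i F i) ^ 2 <= #|I| * \sum_i F i ^ 2.
Proof.
rewrite -(leq_pmul2l (isT : 0 < 2)) expnS expn1 big_distrlr /=.
have -> : 2 * (#|I| * \sum_i F i ^ 2) = \sum_i \sum_j (F i ^ 2 + F j ^ 2).
  symmetry; under eq_bigr do rewrite big_split /= sum_nat_const.
  by rewrite big_split /= sum_nat_const -big_distrr mul2n -addnn.
rewrite big_distrr; apply: leq_sum => i _; rewrite big_distrr; apply: leq_sum => j _.
exact: (nat_Cauchy _ _).1.
Qed.

Lemma exists_leq_of_sum_leq (I : finType) (F G : I -> nat) :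
  0 < #|I| -> \sum_i F i <= \sum_i G i -> exists i, F i <= G i.
Proof.
move=> /card_gt0P[i0 _] le_FG; apply/existsP; apply: contraLR le_FG.
move=> /existsPn lt_GF; rewrite -ltnNge (bigD1 i0) // [X in _ < X](bigD1 i0) //=.
by rewrite -addSn leq_add ?ltnNge ?lt_GF // leq_sum // => i _; rewrite ltnW ?ltnNge ?lt_GF.
Qed.

Lemma cards_sum (T : finType) (P : pred T) : #|[set x | P x]| = \sum_x P x.
Proof. by rewrite -sum1dep_card big_mkcond; apply: eq_bigr => x _; case: (P x). Qed.

Lemma card_heavy_leq (T : finType) (w : T -> nat) (m : nat) :
  #|[set z | m <= w z]| * m <= \sum_z w z.
Proof.
rewrite -sum_nat_const (eq_bigl (fun z => m <= w z)) => [|z]; last by rewrite inE.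
rewrite [X in _ <= X](bigID (fun z => m <= w z)) /=.
by apply: leq_trans (leq_addr _ _); apply: leq_sum.
Qed.

Lemma sum_count_eq_size (I : eqType) (T : finType) (f : I -> T) (s : seq I) :
  \sum_z count (fun x => f x == z) s = size s.
Proof.
elim: s => [|x s IHs] /=; first by rewrite big1.
rewrite big_split /= IHs (bigD1 (f x)) //= eqxx big1 // => z.
by rewrite eq_sym => /negbTE ->.
Qed.

Lemma count_fibre_leq (I : eqType) (T U : finType) (f : I -> T) (h : I -> U) (s : seq I) k :
  uniq s -> {in s &, forall x y, f x = f y -> h x = h y -> x = y} ->
  count (fun x => f x == k) s <= #|U|.
Proof.
move=> s_uniq fh_inj; rewrite -size_filter -(size_map h).
have /card_uniqP <- : uniq [seq h x | x <- s & f x == k].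
  rewrite map_inj_in_uniq ?filter_uniq // => x y.
  rewrite !mem_filter => /andP[/eqP fx xs] /andP[/eqP fy ys].
  by apply: fh_inj => //; rewrite fx fy.
exact: max_card.
Qed.

Lemma exists_notin_set (T : finType) (X : {set T}) (s : seq T) :
  size s < #|X| -> exists2 x, x \in X & x \notin s.
Proof.
move=> lt_sX; apply/exists_inP; apply: contraTT lt_sX => /exists_inPn sub.
rewrite -leqNgt (leq_trans _ (card_size s)) // subset_leq_card //.
by apply/subsetP => x /sub; rewrite negbK.
Qed.

Lemma uniq_flatten_map_uniq (I T : eqType) (F : I -> seq T) (s : seq I) x :
  uniq (flatten [seq F i | i <- s]) -> x \in s -> uniq (F x).
Proof.
elim: s => // i s IHs /=; rewrite cat_uniq inE => /and3P[Fi_uniq _ rest].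
by case/predU1P => [-> // | /(IHs rest)].
Qed.

Lemma uniq_flatten_map_disjoint (I T : eqType) (F : I -> seq T) (s : seq I) x y :
  uniq (flatten [seq F i | i <- s]) -> x \in s -> y \in s -> x != y ->
  forall e, e \in F x -> e \notin F y.
Proof.
elim: s => // i s IHs /=; rewrite cat_uniq => /and3P[_ /hasPn disj uniq_s].
rewrite !inE => /predU1P[-> | xs] /predU1P[-> | ys]; rewrite ?eqxx // => neq e ex.
- apply: contraL ex => ey; apply: disj; apply/flatten_mapP; by exists y.
- apply: disj; apply/flatten_mapP; by exists x.
- exact: IHs.
Qed.

Section Codegrees.
Variables (A B : finType) (E : {set A * B}).

Definition adjA (b : B) : {set A} := [set a | (a, b) \in E].
Definition adjB (a : A) : {set B} := [set b | (a, b) \in E].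
Definition codeg (x y : A) : nat := #|adjB x :&: adjB y|.
Definition low_codeg (d : nat) (S : {set A}) (x : A) : {set A} :=
  [set y in S | codeg x y < d].
Definition low_pairs (d : nat) (S : {set A}) : nat := \sum_(x in S) #|low_codeg d S x|.

Lemma codegC x y : codeg x y = codeg y x.
Proof. by rewrite /codeg setIC. Qed.

Lemma codeg_sum x y : codeg x y = \sum_b (((x, b) \in E) && ((y, b) \in E)).
Proof. by rewrite -cards_sum; apply: eq_card => b; rewrite !inE. Qed.

Lemma sum_card_adjA : \sum_b #|adjA b| = #|E|.
Proof.
under eq_bigr do rewrite cards_sum.
rewrite exchange_big pair_bigA -sum1_card [RHS]big_mkcond /=.
by apply: eq_bigr => -[a b] _; case: (_ \in E).
Qed.

Lemma sum_low_pairs_leq d : \sum_b low_pairs d (adjA b) <= #|A| ^ 2 * d.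
Proof.
have -> : \sum_b low_pairs d (adjA b) =
    \sum_b \sum_x \sum_y (((x, b) \in E) && ((y, b) \in E) && (codeg x y < d)).
  apply: eq_bigr => b _; rewrite /low_pairs big_mkcond /=; apply: eq_bigr => x _.
  rewrite cards_sum inE; case: ((x, b) \in E) => /=; last by rewrite big1.
  by apply: eq_bigr => y _; rewrite !inE.
rewrite exchange_big /=.
apply: (@leq_trans (\sum_(x : A) \sum_(y : A) d)); last first.
  by rewrite !sum_nat_const mulnA.
apply: leq_sum => x _; rewrite exchange_big; apply: leq_sum => y _.
have [lt_xy | _] := ltnP (codeg x y) d; last by rewrite big1 // => b _; rewrite andbF.
by under eq_bigr do rewrite andbT; rewrite -codeg_sum ltnW.
Qed.

Lemma dependent_random_choice d :
  0 < #|B| -> 24 * d * #|A| ^ 2 * #|B| <= #|E| ^ 2 ->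
  exists b, #|E| ^ 2 <= 2 * #|B| ^ 2 * #|adjA b| ^ 2 /\
            12 * low_pairs d (adjA b) <= #|adjA b| ^ 2.
Proof.
move=> B_gt0 dense.
have [b le_b] : exists b,
    #|E| ^ 2 + 24 * #|B| ^ 2 * low_pairs d (adjA b) <= 2 * #|B| ^ 2 * #|adjA b| ^ 2.
  apply: exists_leq_of_sum_leq => //.
  have cs := sqr_sum_leq_card_sum_sqr (fun b => #|adjA b|); rewrite sum_card_adjA in cs.
  have low := sum_low_pairs_leq d.
  rewrite big_split /= sum_nat_const -!big_distrr /=.
  rewrite (_ : #|xpredT| = #|B|) //.
  move: cs low dense; set Q := \sum_b _; set L := \sum_b _.
  move: #|A| #|B| #|E| => a n m cs low dense.
  have low' : 24 * n ^ 2 * L <= n * m ^ 2.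
    apply: leq_trans (_ : n * (24 * d * a ^ 2 * n) <= _).
      by rewrite (_ : n * _ = 24 * n ^ 2 * (a ^ 2 * d)); [rewrite leq_mul2l low orbT | ring].
    by rewrite leq_mul2l dense orbT.
  have cs' : 2 * (n * m ^ 2) <= 2 * n ^ 2 * Q.
    by rewrite -mulnA leq_mul2l expnS expn1 -mulnA leq_mul2l cs !orbT.
  lia.
exists b; split; first exact: leq_trans (leq_addr _ _) le_b.
have N_gt0 : 0 < 2 * #|B| ^ 2 by rewrite muln_gt0 expn_gt0 B_gt0.
rewrite -(leq_pmul2l N_gt0) mulnA (_ : 2 * #|B| ^ 2 * 12 = 24 * #|B| ^ 2); last by ring.
exact: leq_trans (leq_addl _ _) le_b.
Qed.

Lemma exists_codegree_rich_set p :
  0 < #|B| -> 16 * p * #|B| <= #|E| -> 192 * p * #|A| ^ 2 * #|B| <= #|E| ^ 2 ->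
  exists S : {set A}, 3 * p <= #|S| /\ 12 * low_pairs (8 * p) S <= #|S| ^ 2.
Proof.
move=> B_gt0 sparse dense.
have [|b [large few]] := @dependent_random_choice (8 * p) B_gt0.
  by rewrite mulnA.
exists (adjA b); split => //.
rewrite -(@leq_exp2r _ _ 2) // -(@leq_pmul2l (2 * #|B| ^ 2)) ?muln_gt0 ?expn_gt0 ?B_gt0 //.
apply: leq_trans large; apply: leq_trans (_ : (16 * p * #|B|) ^ 2 <= _); last first.
  by rewrite leq_exp2r.
by rewrite !expnMn; nia.
Qed.

Lemma card_few_low_codeg d (S : {set A}) :
  12 * low_pairs d S <= #|S| ^ 2 ->
  #|S| <= 2 * #|[set x in S | 6 * #|low_codeg d S x| <= #|S|]|.
Proof.
set T := [set x in S | _] => few.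
have T_sub : T \subset S by apply/subsetP => x; rewrite inE => /andP[].
have bad_card : #|S :\: T| * #|S|.+1 <= 6 * low_pairs d S.
  rewrite /low_pairs (bigID (mem T)) /= mulnDr; apply: leq_trans (leq_addl _ _).
  rewrite -sum_nat_const big_distrr /= (eq_bigl (fun x => (x \in S) && (x \notin T))).
    by apply: leq_sum => x /andP[xS]; rewrite inE xS /= -ltnNge.
  by move=> x; rewrite !inE andbC.
have := cardsID T S; rewrite (setIidPr T_sub).
nia.
Qed.

Definition route (x y : A) (t : B * A * B) : seq (A * B) :=
  let: (b, z, b') := t in [:: (x, b); (z, b); (z, b'); (y, b')].

Definition load (es : seq (A * B)) (a : A) : nat := count (fun e => e.1 == a) es.

Lemma exists_fresh_route (used : seq (A * B)) (x z y : A) :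
  x != z -> z != y ->
  load used x + load used z < codeg x z -> (load used z + load used y).+1 < codeg z y ->
  exists b b', let r := route x y (b, z, b') in
    [/\ all (mem E) r, uniq r & ~~ has (mem used) r].
Proof.
move=> xz zy free_xz free_zy.
pose nb a := [seq e.2 | e <- used & e.1 == a].
have size_nb a : size (nb a) = load used a by rewrite size_map size_filter.
have nbP a c : (a, c) \in used -> c \in nb a.
  by move=> ac; apply/mapP; exists (a, c); rewrite ?mem_filter /= ?eqxx.
have [b] : exists2 b, b \in adjB x :&: adjB z & b \notin nb x ++ nb z.
  by apply: exists_notin_set; rewrite size_cat !size_nb.
rewrite !inE mem_cat negb_or => /andP[xb zb] /andP[bx bz].
have [b'] : exists2 b', b' \in adjB z :&: adjB y & b' \notin b :: nb z ++ nb y.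
  by apply: exists_notin_set; rewrite /= size_cat !size_nb.
rewrite !inE mem_cat !negb_or => /andP[zb' yb'] /and3P[bb' b'z b'y].
exists b, b'; split.
- by rewrite /= xb zb zb' yb'.
- by rewrite /= !inE !xpair_eqE !negb_or !negb_and xz zy eq_sym bb' !orbT.
- apply/hasPn => e; rewrite !inE => /or4P[] /eqP ->;
  by apply/negP => /nbP; apply/negP.
Qed.

End Codegrees.

Section Routing.
Variables (A B : finType) (E : {set A * B}) (p : nat) (phi : 'I_p -> A).
Hypothesis phi_inj : injective phi.

Definition mid (t : B * A * B) : A := t.1.2.

Definition routing (g : 'I_p * 'I_p -> B * A * B) (ps : seq ('I_p * 'I_p)) : seq (A * B) :=
  flatten [seq route (phi q.1) (phi q.2) (g q) | q <- ps].

Lemma load_routing g ps a :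
  load (routing g ps) a = \sum_(q <- ps) load (route (phi q.1) (phi q.2) (g q)) a.
Proof. by rewrite /load count_flatten sumnE !big_map. Qed.

Lemma load_routing_branch g ps k :
  uniq ps -> {in ps, forall q, mid (g q) \notin codom phi} ->
  load (routing g ps) (phi k) <= 2 * p.
Proof.
move=> ps_uniq mid_off; rewrite load_routing.
have -> : \sum_(q <- ps) load (route (phi q.1) (phi q.2) (g q)) (phi k) =
          count (fun q => q.1 == k) ps + count (fun q => q.2 == k) ps.
  rewrite -!sumn_count !sumnE !big_map -big_split /=; apply: eq_big_seq => q /mid_off.
  case: (g q) => [[b z] b'] /= z_off.
  have /negbTE -> : z != phi k by apply: contra z_off => /eqP ->; exact: codom_f.
  by rewrite !(inj_eq phi_inj) addn0.
have count_le (f h : 'I_p * 'I_p -> 'I_p) :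
    (forall q q', f q = f q' -> h q = h q' -> q = q') -> count (fun q => f q == k) ps <= p.
  move=> fh_inj; have := @count_fibre_leq _ _ _ f h ps k ps_uniq.
  by rewrite card_ord; apply=> q q' _ _; exact: fh_inj.
by rewrite mul2n -addnn leq_add // (count_le fst snd, count_le snd fst) //
  => -[? ?] [? ?] /= -> ->.
Qed.

Lemma load_routing_off_branch g ps z :
  z \notin codom phi -> load (routing g ps) z = 2 * count (fun q => mid (g q) == z) ps.
Proof.
move=> z_off; rewrite load_routing -sumn_count sumnE big_map big_distrr /=.
apply: eq_bigr => q _; case: (g q) => [[b z'] b'] /=.
have phi_z k : (phi k == z) = false by apply: contraNF z_off => /eqP <-; exact: codom_f.
by rewrite !phi_z /mid /=; case: (z' == z).
Qed.

Variable S : {set A}.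
Hypothesis S_large : 3 * p <= #|S|.
Hypothesis phi_good : forall k, 6 * #|low_codeg E (8 * p) S (phi k)| <= #|S|.

Lemma exists_hub (w : A -> nat) (i j : 'I_p) :
  \sum_z w z <= p * p ->
  exists z, [/\ z \notin codom phi, 8 * p <= codeg E (phi i) z,
                8 * p <= codeg E z (phi j) & w z < 2 * p].
Proof.
move=> w_sum; have p_gt0 : 0 < p by apply: leq_ltn_trans (ltn_ord i).
set heavy := [set z | 2 * p <= w z].
have heavy_le : #|heavy| * (2 * p) <= p * p := leq_trans (card_heavy_leq w _) w_sum.
set U := [set z in codom phi] :|: low_codeg E (8 * p) S (phi i)
           :|: low_codeg E (8 * p) S (phi j) :|: heavy.
have U_le : #|U| <= p + #|low_codeg E (8 * p) S (phi i)|
                      + #|low_codeg E (8 * p) S (phi j)| + #|heavy|.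
  have branch_le : #|[set z in codom phi]| <= p by rewrite cardsE card_codom ?card_ord.
  by do 3!(apply: leq_trans (leq_card_setU _ _).1 _; rewrite leq_add2r).
have [z] : exists z, z \in S :\: U.
  apply/card_gt0P; have := cardsID U S; have := subset_leq_card (subsetIr S U).
  have := phi_good i; have := phi_good j; nia.
rewrite inE => /andP[zU zS]; exists z.
move: zU; rewrite !inE zS /= => /norP[/norP[/norP[z_off zi] zj] light].
by split; rewrite // ?ltnNge // leqNgt // codegC.
Qed.

(* [t0] only supplies the values of [g] outside [ps]. *)
Lemma greedy_routing (t0 : B * A * B) (ps : seq ('I_p * 'I_p)) : uniq ps ->
  exists g, [/\ {in ps, forall q, mid (g q) \notin codom phi},
                all (mem E) (routing g ps) & uniq (routing g ps)].
Proof.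
elim: ps => [_ | [i j] ps IHps]; first by exists (fun=> t0).
rewrite cons_uniq => /andP[ij_new ps_uniq].
have [g [mid_off routed uniq_routed]] := IHps ps_uniq.
have ps_size : size ps <= p * p.
  rewrite -(card_uniqP ps_uniq); apply: leq_trans (max_card _) _.
  by rewrite card_prod card_ord.
have [z [z_off free_iz free_zj light]] :=
  @exists_hub (fun z => count (fun q => mid (g q) == z) ps) i j
    (leq_trans (eq_leq (sum_count_eq_size _ _)) ps_size).
have branch_z k : phi k != z by apply: contraNneq z_off => <-; exact: codom_f.
have load_i := @load_routing_branch g ps i ps_uniq mid_off.
have load_j := @load_routing_branch g ps j ps_uniq mid_off.
have load_z := @load_routing_off_branch g ps z z_off.
have [||||b [b' [route_E route_uniq route_fresh]]] :=
  @exists_fresh_route _ _ E (routing g ps) (phi i) z (phi j).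
- exact: branch_z.
- by rewrite eq_sym branch_z.
- rewrite load_z; move: light; set c := count _ ps; lia.
- rewrite load_z; move: light; set c := count _ ps; lia.
pose g' q := if q == (i, j) then (b, z, b') else g q.
have g'_ps : {in ps, g' =1 g}.
  by move=> q q_ps; rewrite /g'; case: eqP => // qij; rewrite -qij q_ps in ij_new.
have routing_cons :
    routing g' ((i, j) :: ps) = route (phi i) (phi j) (b, z, b') ++ routing g ps.
  congr (_ ++ _); first by rewrite /g' eqxx.
  by congr flatten; apply/eq_in_map => q /g'_ps ->.
exists g'; rewrite routing_cons all_cat cat_uniq has_sym.
rewrite route_E route_uniq route_fresh routed uniq_routed.
split=> // q; rewrite inE => /predU1P[-> | q_ps]; first by rewrite /g' eqxx.
by rewrite g'_ps ?mid_off.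
Qed.

End Routing.

Lemma Kp_immersion_len0 (T : finType) (g : rel T) k : Kp_immersion_len g k 0.
Proof.
have phi : 'I_0 -> T by case=> m; rewrite ltn0.
by exists phi; split; [case | exists (fun _ _ => [::]); split; case].
Qed.

Section Immersion.
Variables (A B : finType) (E : {set A * B}).

Definition walk_of (t : B * A * B) (y : A) : seq (A + B) :=
  let: (b, z, b') := t in [:: inr b; inl z; inr b'; inl y].

Definition edge_set (e : A * B) : {set A + B} := [set inl e.1; inr e.2].

Lemma edge_set_inj : injective edge_set.
Proof.
move=> [a b] [a' b'] /setP eq_ab.
have := eq_ab (inl a); have := eq_ab (inr b).
by rewrite !inE !eqxx -!sum_eqE /= orbF => /esym/eqP-> /esym/eqP->.
Qed.

Lemma walk_edges_walk_of x y t :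
  walk_edges (inl x) (walk_of t y) = map edge_set (route x y t).
Proof.
case: t => [[b z] b']; congr [:: _; _; _; _]; by apply/setP => v; rewrite !inE // orbC.
Qed.

Lemma path_walk_of x y t :
  path (bip_adj E) (inl x) (walk_of t y) = all (mem E) (route x y t).
Proof. by case: t => [[b z] b']. Qed.

Lemma uniq_walk_of x y t :
  x != y -> uniq (route x y t) -> uniq (inl x :: walk_of t y).
Proof.
case: t => [[b z] b'] xy /=; rewrite !inE !xpair_eqE -!sum_eqE /= !eqxx !andbT.
rewrite (negbTE xy) !orbF /= => /and3P[/norP[xz _] /norP[bb' _] ->].
by rewrite (negbTE xz) bb'.
Qed.

Definition pairs p : seq ('I_p * 'I_p) :=
  [seq q : 'I_p * 'I_p <- enum {: 'I_p * 'I_p} | q.1 < q.2].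

Lemma K3_immersion_of_routing p (phi : 'I_p -> A) (g : 'I_p * 'I_p -> B * A * B) :
  injective phi -> all (mem E) (routing phi g (pairs p)) -> uniq (routing phi g (pairs p)) ->
  K3_immersion (bip_adj E) p.
Proof.
move=> phi_inj routed uniq_routed.
have pairsP (i j : 'I_p) : i < j -> (i, j) \in pairs p.
  by move=> ij; rewrite mem_filter mem_enum andbT.
exists (fun i => inl (phi i)); split; first by move=> i j [/phi_inj].
exists (fun i j => walk_of (g (i, j)) (phi j)); split.
- move=> i j /pairsP ij_pair; split.
  + rewrite path_walk_of; apply/allP => e e_route; apply: (allP routed).
    by apply/flatten_mapP; exists (i, j).
  + by case: (g (i, j)) => [[b z] b'].
  + by case: (g (i, j)) => [[b z] b'].
  + apply: uniq_walk_of; last exact: uniq_flatten_map_uniq uniq_routed ij_pair.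
    by rewrite (inj_eq phi_inj); apply: contraTneq ij_pair => <-; rewrite mem_filter ltnn.
- move=> i j i' j' /pairsP ij_pair /pairsP ij'_pair neq ed.
  rewrite !walk_edges_walk_of => /mapP[e e_route ->]; rewrite (mem_map edge_set_inj).
  exact: uniq_flatten_map_disjoint uniq_routed ij_pair ij'_pair neq e e_route.
Qed.

End Immersion.

Lemma K3_immersion_of_density (A B : finType) (E : {set A * B}) p :
  0 < p -> 0 < #|B| -> 16 * p * #|B| <= #|E| -> 192 * p * #|A| ^ 2 * #|B| <= #|E| ^ 2 ->
  K3_immersion (bip_adj E) p.
Proof.
move=> p_gt0 B_gt0 sparse dense.
have [S [S_large S_low]] := exists_codegree_rich_set B_gt0 sparse dense.
set T := [set x in S | 6 * #|low_codeg E (8 * p) S x| <= #|S|].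
have T_large : p <= #|T| by have := card_few_low_codeg S_low; rewrite -/T; lia.
pose phi (k : 'I_p) := enum_val (widen_ord T_large k).
have phi_inj : injective phi by move=> k k' /enum_val_inj [] /ord_inj.
have phi_good k : 6 * #|low_codeg E (8 * p) S (phi k)| <= #|S|.
  by have := enum_valP (widen_ord T_large k); rewrite inE => /andP[].
have [[a b] _] : exists e, e \in E.
  by apply/card_gt0P; apply: leq_trans sparse; rewrite !muln_gt0 p_gt0 B_gt0.
have pairs_uniq : uniq (pairs p) by rewrite filter_uniq ?enum_uniq.
have [g [_ routed uniq_routed]] := greedy_routing phi_inj S_large phi_good (b, a, b) pairs_uniq.
exact: K3_immersion_of_routing phi_inj routed uniq_routed.
Qed.

Import Order.TTheory GRing.Theory Num.Theory.

Lemma density_conditions (A B : finType) (E : {set A * B}) p :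
  let alpha : rat := (#|E|%:R / (#|A| * #|B|)%:R)%R in
  0 < p ->
  (p%:R <= Num.min (alpha * #|A|%:R / 16%:R) (alpha ^+ 2 * #|B|%:R / 192%:R))%R ->
  [/\ 0 < #|B|, 16 * p * #|B| <= #|E| & 192 * p * #|A| ^ 2 * #|B| <= #|E| ^ 2].
Proof.
move=> alpha p_gt0; rewrite le_min => /andP[le_p1 le_p2].
have : 0 < #|A| * #|B|.
  rewrite lt0n; apply: contraTneq le_p1 => AB0.
  by rewrite /alpha AB0 invr0 !mulr0 !mul0r -ltNge ltr0n.
rewrite muln_gt0 => /andP[A_gt0 B_gt0].
have A_neq0 : (#|A|%:R : rat) != 0%R by rewrite pnatr_eq0 -lt0n.
have B_neq0 : (#|B|%:R : rat) != 0%R by rewrite pnatr_eq0 -lt0n.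
split=> //.
- move: le_p1; rewrite (_ : (alpha * _ / _ = #|E|%:R / (16 * #|B|)%N%:R)%R); last first.
    by rewrite /alpha !natrM; field; rewrite A_neq0 B_neq0.
  by rewrite ler_pdivlMr ?ltr0n ?muln_gt0 ?B_gt0 // -natrM ler_nat; lia.
- move: le_p2.
  rewrite (_ : (alpha ^+ 2 * _ / _ = (#|E| ^ 2)%N%:R / (192 * #|A| ^ 2 * #|B|)%N%:R)%R);
    last first.
    by rewrite /alpha !natrM; field; rewrite A_neq0 B_neq0.
  by rewrite ler_pdivlMr ?ltr0n ?muln_gt0 ?expn_gt0 ?A_gt0 ?B_gt0 // -natrM ler_nat; lia.
Qed.

Theorem lemma5p4 (A B : finType) (E : {set A * B}) (p : nat) :
  let n1 := #|A| in let n2 := #|B| in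
  let alpha : rat := (#|E|%:R / (n1 * n2)%:R)%R in
  (p%:R <= Num.min (alpha * n1%:R / 16%:R) (alpha ^+ 2 * n2%:R / 192%:R))%R ->
  K3_immersion (bip_adj E) p.
Proof.
move=> n1 n2 alpha le_p.
have [-> | p_gt0] := posnP p; first exact: Kp_immersion_len0.
have [B_gt0 sparse dense] := density_conditions p_gt0 le_p.
exact: K3_immersion_of_density.
Qed.
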